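(* Let $(\Omega,\mathcal{F})$ be a measurable space, let $\mathrm{B}_b$ denote the space of all bounded real-valued $\mathcal{F}$-measurable functions on $\Omega$, and let $C\subset \mathrm{B}_b$ be a set with $0\in C$ and $X+m\in C$ for all $X\in C$ and $m\in\mathbb{R}$. A map $H\colon C\to\mathbb{R}$ is a premium principle if and only if there exist a risk measure $R\colon \mathrm{B}_b\to\mathbb{R}$ and a deviation measure $D\colon C\to\mathbb{R}$ such that $$H(X)=R(X)+D(X)\quad\text{for all }X\in C.$$
   Context: Constants are identified with constant functions, and $\le$ denotes the pointwise order on $\mathrm{B}_b$. A map $H\colon C\to\mathbb{R}$ is a premium principle if (P1) $H(X+m)=H(X)+m$ for all $X\in C$, $m\in\mathbb{R}$, and (P2) $H(0)=0$ and $H(X)\ge 0$ for all $X\in C$ with $X\ge 0$. A map $R\colon \mathrm{B}_b\to\mathbb{R}$ is a risk measure if $R(X+m)=R(X)+m$ for all $X\in\mathrm{B}_b$, $m\in\mathbb{R}$, and $R(0)=0$ and $R(X)\le R(Y)$ whenever $X\le Y$. A map $D\colon C\to\mathbb{R}$ is a deviation measure if $D(X+m)=D(X)$ for all $X\in C$, $m\in\mathbb{R}$, and $D(0)=0$ and $D(X)\ge 0$ for all $X\in C$. *)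

From HB Require Import structures.
From mathcomp Require Import all_boot all_order all_algebra.
From mathcomp Require Import boolp classical_sets reals measure lebesgue_measure.
Set Implicit Arguments. Unset Strict Implicit. Unset Printing Implicit Defensive.
Import Order.TTheory GRing.Theory Num.Theory.
Local Open Scope ring_scope.
Local Open Scope classical_set_scope.

Section Defs.
Context {d : measure_display} {T : measurableType d} {R : realType}.

Definition Bb (X : T -> R) : Prop :=
  measurable_fun setT X /\ exists M : R, forall w, `|X w| <= M.

Definition addc (X : T -> R) (m : R) : T -> R := fun w => X w + m.

Definition fle (X Y : T -> R) : Prop := forall w, X w <= Y w.

(* A map H : C -> R is modelled by H : (T -> R) -> R, only its values on C matter. *)
Definition premium_principle (C : set (T -> R)) (H : (T -> R) -> R) : Prop :=
  (forall X m, C X -> H (addc X m) = H X + m) /\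
  H (fun _ => 0) = 0 /\
  (forall X, C X -> fle (fun _ => 0) X -> 0 <= H X).

(* A map rho : B_b -> R, modelled on all functions, only values on Bb matter. *)
Definition risk_measure (rho : (T -> R) -> R) : Prop :=
  (forall X m, Bb X -> rho (addc X m) = rho X + m) /\
  rho (fun _ => 0) = 0 /\
  (forall X Y, Bb X -> Bb Y -> fle X Y -> rho X <= rho Y).

Definition deviation_measure (C : set (T -> R)) (D : (T -> R) -> R) : Prop :=
  (forall X m, C X -> D (addc X m) = D X) /\
  D (fun _ => 0) = 0 /\
  (forall X, C X -> 0 <= D X).

End Defs.

From mathcomp Require Import all_boot all_order all_algebra.
From mathcomp Require Import boolp classical_sets reals measure lebesgue_measure.
From mathcomp Require Import lra measurable_realfun.
Set Implicit Arguments. Unset Strict Implicit. Unset Printing Implicit Defensive.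
Import Order.TTheory GRing.Theory Num.Theory.
Local Open Scope ring_scope.
Local Open Scope classical_set_scope.

(* Conversely, the infimum [X |-> inf X] is a risk measure, and
   [H - inf] is a deviation measure: it is translation invariant because both
   [H] and [inf] are translation equivariant, and nonnegative because
   [H X - inf X = H (X - inf X)] with [X - inf X >= 0].  The only other point
   is that a premium principle cannot exist on an empty sample space, where
   [0 + 1 = 0] as functions. *)

Section InfRisk.
Context {d : measure_display} {T : measurableType d} {R : realType}.
Implicit Types (X : T -> R) (m : R).

Lemma Bb_addc X m : Bb X -> Bb (addc X m).
Proof.
move=> [mX [M HM]]; split; first exact/measurable_funD.
exists (M + `|m|) => w; apply: le_trans (ler_normD _ _) _.
by rewrite lerD2r.
Qed.

Lemma Bb_has_lbound X : Bb X -> has_lbound (range X).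
Proof.
move=> [_ [M HM]]; exists (- M) => _ [w _ <-].
by have := HM w; rewrite ler_norml => /andP[].
Qed.

Definition inf_risk X : R := inf (range X).

Lemma inf_risk_le X w : Bb X -> inf_risk X <= X w.
Proof. by move=> /Bb_has_lbound/ge_inf; apply; exists w. Qed.

(* [inf set0 = 0]: on an empty space [inf_risk] is not translation equivariant. *)
Variable w0 : T.

Lemma inf_risk_ge X x : (forall w, x <= X w) -> x <= inf_risk X.
Proof.
move=> lbX; apply: lb_le_inf; first by exists (X w0), w0.
by move=> _ [w _ <-].
Qed.

Lemma inf_risk_cst c : inf_risk (fun _ => c) = c.
Proof.
rewrite /inf_risk set_cst ifN ?inf1 //.
by apply/set0P; exists w0.
Qed.

Lemma inf_risk_addc X m : Bb X -> inf_risk (addc X m) = inf_risk X + m.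
Proof.
move=> BX; apply/le_anti/andP; split.
  rewrite -lerBlDr; apply: inf_risk_ge => w.
  by rewrite lerBlDr; apply: inf_risk_le; exact: Bb_addc.
by apply: inf_risk_ge => w; rewrite /addc lerD2r inf_risk_le.
Qed.

Lemma risk_measure_inf : risk_measure inf_risk.
Proof.
split; [exact: inf_risk_addc | split; first exact: inf_risk_cst].
move=> X Y BX _ XY; apply: inf_risk_ge => w.
exact: le_trans (inf_risk_le w BX) (XY w).
Qed.

End InfRisk.

Section PremiumPrinciple.
Context {d : measure_display} {T : measurableType d} {R : realType}.
Variable C : set (T -> R).
Hypothesis hCB : forall X, C X -> Bb X.
Hypothesis hC0 : C (fun _ => 0).
Hypothesis hCm : forall X m, C X -> C (addc X m).

Lemma premium_principle_inhabited H : premium_principle C H -> exists w : T, True.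
Proof.
move=> [Htr [H0 _]]; apply: contrapT => T0.
have cst01 : addc (fun _ : T => 0) 1 = (fun _ => 0 : R).
  by apply: funext => w; exfalso; apply: T0; exists w.
by have := Htr _ 1 hC0; rewrite cst01 H0 add0r => /eqP; rewrite eq_sym oner_eq0.
Qed.

Lemma deviation_measure_sub_inf_risk (w0 : T) H :
  premium_principle C H -> deviation_measure C (fun X => H X - inf_risk X).
Proof.
move=> [Htr [H0 Hpos]]; split; [|split].
- move=> X m CX; rewrite Htr // inf_risk_addc //; [lra | exact: hCB].
- by rewrite H0 inf_risk_cst // subr0.
- move=> X CX; rewrite -Htr //; apply: Hpos; first exact: hCm.
  by move=> w; rewrite /addc subr_ge0 inf_risk_le //; exact: hCB.
Qed.

Lemma premium_principle_add rho D :
  risk_measure rho -> deviation_measure C D ->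
  premium_principle C (fun X => rho X + D X).
Proof.
move=> [rtr [r0 rmon]] [Dtr [D0 Dpos]]; split; [|split].
- by move=> X m CX; rewrite rtr ?Dtr 1?addrAC //; exact: hCB.
- by rewrite r0 D0 addr0.
- move=> X CX X_ge0; apply: addr_ge0; last exact: Dpos.
  by rewrite -r0; apply: rmon => //; exact: hCB.
Qed.

Lemma premium_principle_eq_on H H' : (forall X, C X -> H X = H' X) ->
  premium_principle C H' -> premium_principle C H.
Proof.
move=> HH' [Htr [H0 Hpos]]; split; [|split].
- by move=> X m CX; rewrite !HH' ?Htr //; exact: hCm.
- by rewrite HH'.
- by move=> X CX; rewrite HH' //; exact: Hpos.
Qed.

End PremiumPrinciple.

Theorem theorem2p2 (d : measure_display) (T : measurableType d) (R : realType)
  (C : set (T -> R))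
  (hCB : forall X, C X -> Bb X)
  (hC0 : C (fun _ => 0))
  (hCm : forall X m, C X -> C (addc X m))
  (H : (T -> R) -> R) :
  premium_principle C H <->
  exists (rho D : (T -> R) -> R),
    risk_measure rho /\ deviation_measure C D /\
    (forall X, C X -> H X = rho X + D X).
Proof.
split=> [HC | [rho [D [rho_risk [D_dev HrD]]]]].
- have [w0 _] := premium_principle_inhabited hC0 HC.
  exists inf_risk, (fun X => H X - inf_risk X); split; first exact: risk_measure_inf.
  split; first exact: deviation_measure_sub_inf_risk.
  by move=> X _; rewrite addrC subrK.
- apply: premium_principle_eq_on HrD _ => //.
  exact: premium_principle_add.
Qed.
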